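(* Let $1\le p<d\le n$. Let $C_n(k)$ be the right $Y_n$-comodules of the context, and let $C_n(d-p;\,d-p,\,p)\subseteq C_n(d-p)\otimes C_n(p)$ be the span of the coefficients of all powers of $v^{-1}$ in the series $\tilde f_I(v+d-p)\otimes\tilde f_\Lambda(v)$, for $I\in\binom{[n]}{d-p}$ and $\Lambda\in\binom{[n]}p$. This is a subcomodule of the tensor product comodule. Let $\mu:C_n(d-p;\,d-p,\,p)\to C_n(d)$ be the map given by $$\tilde f_I(u+d-p)\otimes\tilde f_\Lambda(u)\mapsto\tilde f_{I|\Lambda}(u+d-p),$$ i.e. the coefficient of $u^{-r}$ on the left is sent to the coefficient of $u^{-r}$ on the right. Then $\mu$ is a morphism of right $Y_n$-comodules.
   Context: $Y_n$ is the Yangian: the complex associative unital algebra with generators $t^{(r)}_{ij}$ ($1\le i,j\le n$, $r\ge1$) and relations $[t_{ij}^{(r+1)},t_{kl}^{(s)}]-[t_{ij}^{(r)},t_{kl}^{(s+1)}]=t_{kj}^{(r)}t_{il}^{(s)}-t_{kj}^{(s)}t_{il}^{(r)}$ ($r,s\ge0$, $t^{(0)}_{ij}=\delta_{ij}$). Put $t_{ij}(u)=\delta_{ij}+\sum_{r\ge1}t^{(r)}_{ij}u^{-r}$, with coproduct $\Delta(t_{ij}(u))=\sum_kt_{ik}(u)\otimes t_{kj}(u)$. The Yangian minor is $$t^I_J(u)=\sum_{\sigma\in\mathfrak S_d}\operatorname{sgn}(\sigma)\,t_{i_{\sigma(1)}j_1}(u)\,t_{i_{\sigma(2)}j_2}(u-1)\cdots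 t_{i_{\sigma(d)}j_d}(u-d+1).$$ Shifts $g(u+a)$ are obtained by expanding $(u+a)^{-r}$ in powers of $u^{-1}$. $C_n(k)$ is the complex vector space spanned by $\tilde f^{(r)}_I$ ($I\in[n]^k$, $r\ge0$) modulo the coefficients of $\tilde f_{\sigma I}(u)=\operatorname{sgn}(\sigma)\tilde f_I(u)$ ($\sigma\in\mathfrak S_k$), where $\tilde f_I(u)=\sum_{r\ge0}\tilde f_I^{(r)}u^{-r}$. It is a right $Y_n$-comodule via $\rho(\tilde f_I(u))=\sum_{K\in\binom{[n]}k}\tilde f_K(u)\otimes t^K_I(u)$. Tensor products carry the structure $\rho(x\otimes y)=\sum x_{(0)}\otimes y_{(0)}\otimes x_{(1)}y_{(1)}$. $I|\Lambda$ denotes concatenation of the increasing listings of $I$ and $\Lambda$. *)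

From HB Require Import structures.
From mathcomp Require Import all_boot all_order all_algebra all_fingroup.
Set Implicit Arguments. Unset Strict Implicit. Unset Printing Implicit Defensive.
Import Order.TTheory GRing.Theory Num.Theory.
Local Open Scope ring_scope.

(* Conventions.
   - Indices of [n] are 0,...,n-1 (natural numbers < n).
   - A formal series  g(u) = sum_{r>=0} g^(r) u^{-r}  is its coefficient
     function  g : nat -> A,  g r = g^(r).
   - The Yangian generators are modelled by a family  t : nat -> nat -> nat -> A
     in a F-algebra A,  t r i j = t_{ij}^{(r)}  (r >= 1), satisfying the
     defining relations of Y_n (universal property of Y_n).
   - C_n(k) is modelled through its basis f~_K^{(r)}, K an r-subset of [n]
     ({set 'I_n} with #|K| = k), listed increasingly; an element of
     C_n(k) (x) A is its coefficient function  K -> r -> A, an element of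
     C_n(k1) (x) C_n(k2) (x) A is a function  K1 -> r1 -> K2 -> r2 -> A. *)

Section Yangian.
Variable A : pzRingType.

Definition tco (t : nat -> nat -> nat -> A) (r i j : nat) : A :=
  if r == 0%N then (i == j)%:R else t r i j.

Definition yangian_rel (n : nat) (t : nat -> nat -> nat -> A) : Prop :=
  forall (r s i j k l : nat), (i < n)%N -> (j < n)%N -> (k < n)%N -> (l < n)%N ->
    (tco t r.+1 i j * tco t s k l - tco t s k l * tco t r.+1 i j)
    - (tco t r i j * tco t s.+1 k l - tco t s.+1 k l * tco t r i j)
    = tco t r k j * tco t s i l - tco t s k j * tco t r i l.

(* coefficient of u^{-(r+j)} in (u+a)^{-r}:  (-1)^j C(r+j-1,j) a^j
   (equal to delta_{j0} when r = 0, thanks to truncated subtraction) *)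
Definition csh (a : int) (r j : nat) : int :=
  (-1) ^+ j * ('C((r + j).-1, j))%:Z * a ^+ j.

(* the series g(u+a) *)
Definition shift (a : int) (g : nat -> A) (m : nat) : A :=
  \sum_(r < m.+1) g r * (csh a r (m - r))%:~R.

Definition mulser (g h : nat -> A) (m : nat) : A :=
  \sum_(i < m.+1) g i * h (m - i)%N.

Definition oneser (m : nat) : A := (m == 0%N)%:R.

Definition minor (t : nat -> nat -> nat -> A) (I J : seq nat) (m : nat) : A :=
  \sum_(s : 'S_(size J))
     (-1) ^+ odd_perm s *
        (\big[mulser/oneser]_(k < size J)
            shift (- (k : nat)%:Z) (fun r => tco t r (nth 0%N I (s k)) (nth 0%N J k))) m.

Definition setseq (n : nat) (K : {set 'I_n}) : seq nat := map val (enum K).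

(* rho(f~_J^{(r)}) in C_n(k) (x) A, from rho(f~_J(u)) = sum_K f~_K(u) (x) t^K_J(u) *)
Definition rhoC (n k : nat) (t : nat -> nat -> nat -> A) (J : seq nat) (r : nat)
  (K : {set 'I_n}) (s : nat) : A :=
  if (#|K| == k) && (s <= r)%N then minor t (setseq K) J (r - s) else 0.

Definition rhoCC (n k1 k2 : nat) (t : nat -> nat -> nat -> A)
  (J1 : seq nat) (r1 : nat) (J2 : seq nat) (r2 : nat)
  (K1 : {set 'I_n}) (s1 : nat) (K2 : {set 'I_n}) (s2 : nat) : A :=
  rhoC k1 t J1 r1 K1 s1 * rhoC k2 t J2 r2 K2 s2.

(* rho of g_{I,L,m} := coefficient of v^{-m} in f~_I(v+a) (x) f~_L(v)
   = sum_{s<=m} sum_{r<=m-s} csh a r (m-s-r) f~_I^(r) (x) f~_L^(s) *)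
Definition rho_g (n k1 k2 : nat) (t : nat -> nat -> nat -> A) (a : int)
  (I L : {set 'I_n}) (m : nat)
  (K1 : {set 'I_n}) (s1 : nat) (K2 : {set 'I_n}) (s2 : nat) : A :=
  \sum_(s < m.+1) \sum_(r < (m - s).+1)
     (csh a r (m - s - r))%:~R *
     rhoCC k1 k2 t (setseq I) r (setseq L) s K1 s1 K2 s2.

(* rho of h_{J,m} := coefficient of u^{-m} in f~_J(u+a) *)
Definition rho_h (n k : nat) (t : nat -> nat -> nat -> A) (a : int)
  (J : seq nat) (m : nat) (K : {set 'I_n}) (s : nat) : A :=
  \sum_(r < m.+1) (csh a r (m - r))%:~R * rhoC k t J r K s.

End Yangian.

Definition inversions (J : seq nat) : nat :=
  \sum_(i < size J) \sum_(j < size J)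
     ((i < j)%N && (nth 0%N J j < nth 0%N J i)%N : nat).

(* coordinates (integers) of f~_J^{(r)} on the basis f~_K^{(r)}:
   f~_J = sgn * f~_K if J is a permutation of the increasing listing of K,
   and 0 if J has a repeated entry (antisymmetry relations of C_n(k)) *)
Definition fco (n : nat) (K : {set 'I_n}) (J : seq nat) : int :=
  if perm_eq (setseq K) J then (-1) ^+ inversions J else 0.

(* coordinates of g_{I,L,m} (coefficient of v^{-m} in f~_I(v+a) (x) f~_L(v))
   on the basis f~_K^{(r)} (x) f~_L'^{(s)} *)
Definition gco (n : nat) (a : int) (I L : {set 'I_n}) (m : nat)
  (K : {set 'I_n}) (r : nat) (L' : {set 'I_n}) (s : nat) : int :=
  if (K == I) && (L' == L) && (r + s <= m)%N then csh a r (m - s - r) else 0.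

(* coordinates of h_{J,m} (coefficient of u^{-m} in f~_J(u+a)) on the basis
   f~_K^{(r)} *)
Definition hco (n : nat) (a : int) (J : seq nat) (m : nat)
  (K : {set 'I_n}) (r : nat) : int :=
  if (r <= m)%N then csh a r (m - r) * fco K J else 0.

Section Sums.
Variable A : pzRingType.
(* sum_{I,L,m'<N} g_{I,L,m'} (x) c(I,L,m')  in C(k1) (x) C(k2) (x) A *)
Definition sum_g (n k1 k2 : nat) (a : int) (N : nat)
  (c : {set 'I_n} -> {set 'I_n} -> nat -> A)
  (K1 : {set 'I_n}) (s1 : nat) (K2 : {set 'I_n}) (s2 : nat) : A :=
  \sum_(I : {set 'I_n} | #|I| == k1) \sum_(L : {set 'I_n} | #|L| == k2)
    \sum_(m < N) (gco a I L m K1 s1 K2 s2)%:~R * c I L m.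

(* (mu (x) id)(sum_{I,L,m'<N} g_{I,L,m'} (x) c(I,L,m'))
   = sum h_{I|L,m'} (x) c(I,L,m')  in C(k1+k2) (x) A *)
Definition sum_h (n k1 k2 : nat) (a : int) (N : nat)
  (c : {set 'I_n} -> {set 'I_n} -> nat -> A)
  (K : {set 'I_n}) (s : nat) : A :=
  \sum_(I : {set 'I_n} | #|I| == k1) \sum_(L : {set 'I_n} | #|L| == k2)
    \sum_(m < N) (hco a (setseq I ++ setseq L) m K s)%:~R * c I L m.
End Sums.

(* Expanding the minor t^K_{I|L}(u) along its first d-p columns gives
     t^K_{I|L}(u) = sum_{I0, L0} sgn(K; I0|L0) t^{I0}_I(u) t^{L0}_L(u-d+p),
   where sgn(K; I0|L0) is the coordinate of f~_{I0|L0} on f~_K. No Yangian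
   relation is needed: the columns of a minor come in a fixed order with fixed
   shifts, so only the rows are permuted, and a row assignment splits into one
   for each block of columns. Shifting u to u+d-p, which is multiplicative on
   series, turns the right-hand side into (mu (x) id) of the coaction of
   f~_I(u+d-p) (x) f~_L(u), and the left-hand side into the coaction of
   f~_{I|L}(u+d-p). The same multiplicativity shows that the coaction of
   f~_I(v+d-p) (x) f~_L(v) only involves coefficients of series of that form. *)

From HB Require Import structures.
From mathcomp Require Import all_boot all_order all_algebra all_fingroup.
From mathcomp Require Import ring zify.
From Stdlib Require Import FunctionalExtensionality.
Import GRing.Theory.
Local Open Scope ring_scope.

Lemma sum_ord_widen {V : nmodType} n N (F : nat -> V) : (n <= N)%N ->
  (forall k, (n <= k < N)%N -> F k = 0) ->
  \sum_(k < n) F k = \sum_(k < N) F k.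
Proof.
move=> leN F0; rewrite (big_ord_widen N F leN) big_mkcond /=.
apply: eq_bigr => k _; case: ltnP => // nk.
by rewrite F0 // nk ltn_ord.
Qed.

Lemma sum_antidiagonal {V : nmodType} M (F : nat -> nat -> V) :
    (forall i k, (M <= i + k)%N -> F i k = 0) ->
  \sum_(r < M) \sum_(i < r.+1) F i (r - i)%N = \sum_(i < M) \sum_(k < M) F i k.
Proof.
move=> F0.
transitivity (\sum_(r < M) \sum_(i < M) if (i <= r)%N then F i (r - i)%N else 0).
  apply: eq_bigr => r _.
  by rewrite (big_ord_widen M (fun i => F i (r - i)%N)) // big_mkcond.
rewrite exchange_big /=; apply: eq_bigr => i _.
rewrite -big_mkcond /= -(big_mkord (fun r => i <= r)%N (fun r => F i (r - i)%N)).
rewrite (big_cat_nat (n := i)) //=; last exact: ltnW.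
rewrite [X in X + _]big_nat_cond big_pred0 ?add0r => [|r]; last lia.
rewrite -{1}[i : nat]add0n big_addn.
rewrite (eq_bigl xpredT) => [|r]; last by rewrite leq_addl.
rewrite big_mkord (@sum_ord_widen _ _ _ (fun k => F i (k + i - i)%N) (leq_subr i M)).
  by apply: eq_bigr => k _; rewrite addnK.
by move=> k /andP [ik _]; rewrite addnK F0 //; lia.
Qed.

Lemma sum_ord_mulrb_eq {V : nmodType} (F : nat -> V) n s :
  \sum_(i < n) F i *+ (i == s :> nat) = if (s < n)%N then F s else 0.
Proof.
rewrite -(big_ord1_eq (@GRing.add V)) [RHS]big_mkcond.
by apply: eq_bigr => i _; rewrite mulrb.
Qed.

Lemma sum_only1 {V : nmodType} {T : finType} (P : pred T) (F : T -> V) x :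
  (forall y, y != x -> F y = 0) -> \sum_(y | P y) F y = if P x then F x else 0.
Proof.
move=> F0; case: ifP => Px; first by apply: big_only1 => // y /F0.
by apply: big1 => y Py; apply: F0; apply: contraTneq Py => ->; rewrite Px.
Qed.

(** * Formal series in [u^-1] *)

Section Series.
Context {R : nzRingType}.
Implicit Types f g h : nat -> R.

Definition series_poly M f : {poly R} := \poly_(i < M) f i.

Lemma mulser_coefM f g {m M : nat} : (m < M)%N ->
  mulser f g m = (series_poly M f * series_poly M g)`_m.
Proof.
move=> ltmM; rewrite coefM; apply: eq_bigr => i _; rewrite !coef_poly.
have -> : (i < M)%N by apply: leq_ltn_trans ltmM; rewrite -ltnS.
by have -> : (m - i < M)%N by apply: leq_ltn_trans ltmM; apply: leq_subr.
Qed.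

Lemma series_poly_mulser f g M i : (i < M)%N ->
  (series_poly M (mulser f g))`_i = (series_poly M f * series_poly M g)`_i.
Proof. by move=> ltiM; rewrite coef_poly ltiM (mulser_coefM _ _ ltiM). Qed.

Lemma coefM_low_eql {p q r : {poly R}} {m : nat} :
  (forall i, (i <= m)%N -> p`_i = q`_i) -> (p * r)`_m = (q * r)`_m.
Proof. by move=> eq_pq; rewrite !coefM; apply: eq_bigr => i _; rewrite eq_pq // -ltnS. Qed.

Lemma coefM_low_eqr {p q r : {poly R}} {m : nat} :
  (forall i, (i <= m)%N -> p`_i = q`_i) -> (r * p)`_m = (r * q)`_m.
Proof. by move=> eq_pq; rewrite !coefM; apply: eq_bigr => i _; rewrite eq_pq // leq_subr. Qed.

Lemma mulserA : associative (@mulser R).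
Proof.
move=> f g h; apply: functional_extensionality => m.
rewrite !(mulser_coefM _ _ (ltnSn m)).
rewrite (coefM_low_eql (@series_poly_mulser f g m.+1)).
by rewrite (coefM_low_eqr (@series_poly_mulser g h m.+1)) mulrA.
Qed.

Lemma mul1ser : left_id (oneser R) (@mulser R).
Proof.
move=> f; apply: functional_extensionality => m.
rewrite /mulser big_ord_recl /oneser eqxx mul1r subn0 big1 ?addr0 // => i _.
by rewrite mul0r.
Qed.

Lemma mulser1 : right_id (oneser R) (@mulser R).
Proof.
move=> f; apply: functional_extensionality => m.
rewrite /mulser big_ord_recr /= /oneser subnn eqxx mulr1 big1 ?add0r // => i _.
by rewrite subn_eq0 leqNgt ltn_ord mulr0.
Qed.

HB.instance Definition _ :=
  Monoid.isLaw.Build (nat -> R) (oneser R) (@mulser R) mulserA mul1ser mulser1.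

Lemma mulser_suml (I : Type) (r : seq I) (P : pred I) (F : I -> nat -> R) g m :
  mulser (fun j => \sum_(i <- r | P i) F i j) g m = \sum_(i <- r | P i) mulser (F i) g m.
Proof. by rewrite /mulser (eq_bigr _ (fun j _ => mulr_suml _ _ _ _)) exchange_big. Qed.

Lemma mulser_sumr (I : Type) (r : seq I) (P : pred I) (F : I -> nat -> R) f m :
  mulser f (fun j => \sum_(i <- r | P i) F i j) m = \sum_(i <- r | P i) mulser f (F i) m.
Proof. by rewrite /mulser (eq_bigr _ (fun j _ => mulr_sumr _ _ _ _)) exchange_big. Qed.

Lemma mulser_mulzl (z : int) f g m :
  mulser (fun j => z%:~R * f j) g m = z%:~R * mulser f g m.
Proof. by rewrite /mulser mulr_sumr; apply: eq_bigr => j _; rewrite mulrA. Qed.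

Lemma mulser_mulzr (z : int) f g m :
  mulser f (fun j => z%:~R * g j) m = z%:~R * mulser f g m.
Proof.
rewrite /mulser mulr_sumr; apply: eq_bigr => j _.
by rewrite mulrA (commr_int (f j) z) mulrA.
Qed.

End Series.

(** * Shifted series [g(u + a)] *)

Lemma cshSS a r j : csh a r.+1 j.+1 = csh a r j.+1 - a * csh a r.+1 j.
Proof.
by rewrite /csh !addnS !addSn /= binS PoszD !exprS; ring.
Qed.

(* [(u + a)^-r = \sum_m shift_coef a r m u^-m] *)
Definition shift_coef (a : int) (r m : nat) : int :=
  if (r <= m)%N then csh a r (m - r) else 0.

Lemma shift_coef0l a m : shift_coef a 0 m = (m == 0)%:R.
Proof.
rewrite /shift_coef /csh subn0; case: m => [|m] /=; first by rewrite bin0 !mul1r.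
by rewrite bin_small ?mulr0 ?mul0r.
Qed.

Lemma shift_coef_small a r m : (m < r)%N -> shift_coef a r m = 0.
Proof. by rewrite /shift_coef ltnNge => /negbTE ->. Qed.

Lemma shift_coefS0 a r : shift_coef a r.+1 0 = 0.
Proof. exact: shift_coef_small. Qed.

(* from [(u + a)^-(r+1) (u + a) = (u + a)^-r] *)
Lemma shift_coefSS a r m :
  shift_coef a r.+1 m.+1 = shift_coef a r m - a * shift_coef a r.+1 m.
Proof.
rewrite /shift_coef ltnS; case: ltngtP => [ltrm|_|->].
- by rewrite subSS -(subnSK ltrm) cshSS.
- by rewrite mulr0 subr0.
- by rewrite !subnn /csh !expr0 !mul1r !bin0 mulr0 subr0.
Qed.

Lemma shift_recurrence_uniq a (G H : nat -> nat -> int) :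
    G 0%N =1 H 0%N -> (forall r, G r.+1 0%N = 0) -> (forall r, H r.+1 0%N = 0) ->
    (forall r m, G r.+1 m.+1 = G r m - a * G r.+1 m) ->
    (forall r m, H r.+1 m.+1 = H r m - a * H r.+1 m) ->
  G =2 H.
Proof.
move=> eq0 G0 H0 GS HS; elim=> [|r IHr]; first exact: eq0.
by elim=> [|m IHm]; rewrite ?G0 ?H0 // GS HS IHr IHm.
Qed.

Lemma shift_coefD a r1 r2 m :
  \sum_(j < m.+1) shift_coef a r1 j * shift_coef a r2 (m - j) = shift_coef a (r1 + r2) m.
Proof.
pose G r m : int := \sum_(j < m.+1) shift_coef a r1 j * shift_coef a r (m - j).
apply: (@shift_recurrence_uniq a G (fun r => shift_coef a (r1 + r))) => {r2 m}.
- move=> m; rewrite /G addn0 big_ord_recr /= subnn shift_coef0l mulr1 big1 ?add0r //.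
  by move=> j _; rewrite shift_coef0l subn_eq0 leqNgt ltn_ord mulr0.
- by move=> r; rewrite /G big_ord1 shift_coefS0 mulr0.
- by move=> r; rewrite addnS shift_coefS0.
- move=> r m; rewrite /G big_ord_recr /= subnn shift_coefS0 mulr0 addr0.
  rewrite mulr_sumr -sumrB; apply: eq_bigr => j _.
  have lejm : (j <= m)%N by rewrite -ltnS.
  by rewrite subSn // shift_coefSS mulrBr mulrCA.
- by move=> r m; rewrite !addnS shift_coefSS.
Qed.

Lemma shift_coef_comp a b r m :
  \sum_(j < m.+1) shift_coef b r j * shift_coef a j m = shift_coef (a + b) r m.
Proof.
pose G r m : int := \sum_(j < m.+1) shift_coef b r j * shift_coef a j m.
suff GE : G =2 shift_coef (a + b) by exact: GE.
apply: (@shift_recurrence_uniq (a + b)) => {r m}.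
- move=> m; rewrite /G big_ord_recl /= !shift_coef0l mul1r big1 ?addr0 //.
  by move=> j _; rewrite shift_coef0l mul0r.
- by move=> r; rewrite /G big_ord1 shift_coefS0 mul0r.
- exact: shift_coefS0.
- move=> r m; rewrite [LHS]/G big_ord_recl /= shift_coefS0 mul0r add0r.
  have shifted : \sum_(j < m.+1) shift_coef b r.+1 j.+1 * shift_coef a j.+1 m = G r.+1 m.
    rewrite /G big_ord_recr /= (@shift_coef_small a m.+1 m) // mulr0 addr0.
    by rewrite [RHS]big_ord_recl shift_coefS0 mul0r add0r.
  transitivity (G r m - b * G r.+1 m -
      a * \sum_(j < m.+1) shift_coef b r.+1 j.+1 * shift_coef a j.+1 m); last first.
    by rewrite shifted; ring.
  rewrite /G !mulr_sumr -!sumrB; apply: eq_bigr => j _.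
  by rewrite /bump add1n !shift_coefSS; ring.
- by move=> r m; rewrite shift_coefSS.
Qed.

Lemma shift_coef0 r m : shift_coef 0 r m = (r == m)%:R.
Proof.
rewrite /shift_coef /csh expr0n; case: ltngtP => [ltrm|//|->].
  by rewrite subn_eq0 leqNgt ltrm mulr0.
by rewrite subnn expr0 !mul1r bin0.
Qed.

Section Shift.
Context {R : nzRingType}.
Implicit Types f g : nat -> R.

Lemma shiftE a g {m M : nat} : (m < M)%N ->
  shift a g m = \sum_(r < M) g r * (shift_coef a r m)%:~R.
Proof.
move=> ltmM; rewrite -(@sum_ord_widen _ m.+1 M (fun r => g r * (shift_coef a r m)%:~R)) //.
- by apply: eq_bigr => r _; rewrite /shift_coef -ltnS ltn_ord.
- by move=> r /andP [ltmr _]; rewrite shift_coef_small ?mulr0.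
Qed.

Lemma shift_mulser a f g : shift a (mulser f g) = mulser (shift a f) (shift a g).
Proof.
apply: functional_extensionality => m.
transitivity (\sum_(i < m.+1) \sum_(k < m.+1) f i * g k * (shift_coef a (i + k) m)%:~R).
  pose F i k := f i * g k * (shift_coef a (i + k) m)%:~R.
  rewrite (shiftE _ _ (ltnSn m)) /mulser -(@sum_antidiagonal _ _ F) => [|i k ltm];
    last by rewrite /F shift_coef_small ?mulr0.
  apply: eq_bigr => r _; rewrite mulr_suml; apply: eq_bigr => i _.
  by rewrite /F subnKC // -ltnS.
have expand (j : 'I_m.+1) : shift a f j * shift a g (m - j) =
    \sum_(i < m.+1) \sum_(k < m.+1)
      f i * g k * (shift_coef a i j * shift_coef a k (m - j))%:~R.
  rewrite (shiftE _ _ (ltn_ord j)) (shiftE _ _ (leq_subr j m : m - j < m.+1)%N) mulr_suml.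
  apply: eq_bigr => i _; rewrite mulr_sumr; apply: eq_bigr => k _.
  by rewrite !mulrzr mulrzAl mulrzAr mulrC mulrzA.
rewrite /mulser (eq_bigr _ (fun j _ => expand j)) [RHS]exchange_big.
apply: eq_bigr => i _; rewrite [RHS]exchange_big; apply: eq_bigr => k _.
by rewrite -mulr_sumr -rmorph_sum shift_coefD.
Qed.

Lemma shift_shift a b f : shift a (shift b f) = shift (a + b) f.
Proof.
apply: functional_extensionality => m.
rewrite !(shiftE _ _ (ltnSn m)).
under eq_bigr => j _ do rewrite (shiftE _ _ (ltn_ord j)) mulr_suml.
rewrite exchange_big; apply: eq_bigr => r _.
by rewrite -shift_coef_comp rmorph_sum mulr_sumr; apply: eq_bigr => j _; rewrite rmorphM mulrA.
Qed.

Lemma shift0 f : shift 0 f = f.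
Proof.
apply: functional_extensionality => m.
rewrite (shiftE _ _ (ltnSn m)) big_ord_recr /= shift_coef0 eqxx mulr1 big1 ?add0r //.
by move=> r _; rewrite shift_coef0 ltn_eqF ?mulr0.
Qed.

Lemma shift_oneser a : shift a (oneser R) = oneser R.
Proof.
apply: functional_extensionality => m.
rewrite (shiftE _ _ (ltnSn m)) big_ord_recl /oneser eqxx mul1r shift_coef0l big1 ?addr0.
  by case: (m == 0)%N.
by move=> r _; rewrite mul0r.
Qed.

Lemma shift_bigmulser a n (F : 'I_n -> nat -> R) :
  shift a (\big[@mulser R/oneser R]_(k < n) F k) = \big[@mulser R/oneser R]_(k < n) shift a (F k).
Proof. exact: (big_morph (shift a) (shift_mulser a) (shift_oneser a)). Qed.

Lemma shift_sum a (I : Type) (r : seq I) (P : pred I) (F : I -> nat -> R) m :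
  shift a (fun j => \sum_(i <- r | P i) F i j) m = \sum_(i <- r | P i) shift a (F i) m.
Proof. by rewrite /shift (eq_bigr _ (fun j _ => mulr_suml _ _ _ _)) exchange_big. Qed.

Lemma shift_mulzl a (z : int) g m :
  shift a (fun j => z%:~R * g j) m = z%:~R * shift a g m.
Proof. by rewrite /shift mulr_sumr; apply: eq_bigr => j _; rewrite mulrA. Qed.

End Shift.

Section Monomial.
Context {R : nzRingType}.
Implicit Types f g : nat -> R.

Definition monoser (s : nat) : nat -> R := fun j => (j == s)%:R.

Lemma monoser0 : monoser 0 = oneser R.
Proof. by []. Qed.

Lemma mulser_monol s g m :
  mulser (monoser s) g m = if (s <= m)%N then g (m - s)%N else 0.
Proof.
rewrite /mulser (eq_bigr _ (fun i _ => mulr_natl _ _)).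
by rewrite (sum_ord_mulrb_eq (fun i => g (m - i)%N)) ltnS.
Qed.

Lemma mulser_rev f g m : mulser f g m = \sum_(i < m.+1) f (m - i)%N * g i.
Proof.
rewrite /mulser (reindex_inj rev_ord_inj); apply: eq_bigr => i _.
by rewrite /= subSS subKn // -ltnS.
Qed.

Lemma mulser_monor s g m :
  mulser g (monoser s) m = if (s <= m)%N then g (m - s)%N else 0.
Proof.
rewrite mulser_rev (eq_bigr _ (fun i _ => mulr_natr _ _)).
by rewrite (sum_ord_mulrb_eq (fun i => g (m - i)%N)) ltnS.
Qed.

Lemma mulser_monoC s g : mulser g (monoser s) = mulser (monoser s) g.
Proof. by apply: functional_extensionality => m; rewrite mulser_monol mulser_monor. Qed.

Lemma shift_monoser a s m : shift a (monoser s) m = (shift_coef a s m)%:~R.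
Proof.
rewrite (shiftE a _ (leq_maxr s m : m < (maxn s m).+1)%N).
rewrite (eq_bigr _ (fun r _ => mulr_natl _ _)) (sum_ord_mulrb_eq (fun r => (shift_coef a r m)%:~R)).
by rewrite ltnS leq_maxl.
Qed.

Lemma mulser_shift_monoser a s1 s2 m :
  mulser (shift a (monoser s1)) (monoser s2) m =
  (if (s1 + s2 <= m)%N then csh a s1 (m - s2 - s1) else 0)%:~R.
Proof.
rewrite mulser_monor shift_monoser /shift_coef.
case: (leqP s2 m) => [le_s2m|lt_ms2]; first by rewrite leq_subRL // addnC.
by rewrite leqNgt (leq_trans lt_ms2 (leq_addl _ _)) /= mulr0z.
Qed.

End Monomial.

Section Lincomb.
Context {R : nzRingType}.

Lemma shift_lincomb a (I : finType) (c : I -> int) (F : I -> nat -> R) :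
  shift a (fun j => \sum_i (c i)%:~R * F i j) = fun j => \sum_i (c i)%:~R * shift a (F i) j.
Proof.
apply: functional_extensionality => m; rewrite shift_sum.
by apply: eq_bigr => i _; rewrite shift_mulzl.
Qed.

Lemma mulser_lincomb (I J : finType) (c : I -> int) (e : J -> int)
    (F : I -> nat -> R) (G : J -> nat -> R) m :
  mulser (fun j => \sum_i (c i)%:~R * F i j) (fun j => \sum_k (e k)%:~R * G k j) m =
  \sum_i \sum_k (c i * e k)%:~R * mulser (F i) (G k) m.
Proof.
rewrite mulser_suml; apply: eq_bigr => i _; rewrite mulser_mulzl mulser_sumr mulr_sumr.
by apply: eq_bigr => k _; rewrite mulser_mulzr intrM mulrA.
Qed.

Lemma shift_mulser_lincomb a (g : nat -> R) (I : Type) (r : seq I) (P : pred I) (c : I -> int)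
    (F : I -> nat -> R) m :
  shift a (mulser g (fun j => \sum_(i <- r | P i) (c i)%:~R * F i j)) m =
  \sum_(i <- r | P i) (c i)%:~R * shift a (mulser g (F i)) m.
Proof.
have -> : mulser g (fun j => \sum_(i <- r | P i) (c i)%:~R * F i j) =
    fun j => \sum_(i <- r | P i) (c i)%:~R * mulser g (F i) j.
  apply: functional_extensionality => j; rewrite mulser_sumr.
  by apply: eq_bigr => i _; rewrite mulser_mulzr.
by rewrite shift_sum; apply: eq_bigr => i _; rewrite shift_mulzl.
Qed.

End Lincomb.

(** * Signs *)

Definition perm_inversions {d} (s : 'S_d) : nat :=
  \sum_(i < d) \sum_(j < d) ((i < j) && (s j < s i))%N.

Lemma sum_ord_ltn d j : (\sum_(k < d) ((k < j)%N : nat))%N = minn j d.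
Proof.
elim: d => [|d IHd]; first by rewrite big_ord0 minn0.
by rewrite big_ord_recr /= IHd; case: (ltnP d j) => ? ; lia.
Qed.

Lemma lift_ltn {d} (j : 'I_d.+1) (x : 'I_d) : (lift j x < j)%N = (x < j)%N.
Proof. by rewrite /= /bump; case: leqP => ? /=; lia. Qed.

Lemma lift_ltn_lift {d} (j : 'I_d.+1) (x y : 'I_d) : (lift j x < lift j y)%N = (x < y)%N.
Proof. by rewrite /= /bump; case: (leqP j x); case: (leqP j y) => ? ? /=; lia. Qed.

Lemma perm_inversions_lift {d} (j : 'I_d.+1) (s : 'S_d) :
  perm_inversions (lift_perm ord0 j s) = (j + perm_inversions s)%N.
Proof.
rewrite /perm_inversions big_ord_recl big_ord_recl /= add0n; congr addn.
  under eq_bigr => k _ do rewrite lift_perm_id lift_perm_lift lift_ltn.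
  rewrite (reindex_perm s^-1); under eq_bigr => k _ do rewrite permKV.
  rewrite sum_ord_ltn.
  by apply/minn_idPl; rewrite -ltnS.
apply: eq_bigr => i _; rewrite big_ord_recl /= add0n.
by apply: eq_bigr => k _; rewrite !lift_perm_lift lift_ltn_lift.
Qed.

Lemma perm_lift_ord0 {d} (s : 'S_d.+1) : exists s' : 'S_d, s = lift_perm ord0 (s ord0) s'.
Proof.
pose s' (k : 'I_d) : 'I_d := odflt k (unlift (s ord0) (s (lift ord0 k))).
have s'K k : lift (s ord0) (s' k) = s (lift ord0 k).
  rewrite /s'; have:= neq_lift ord0 k.
  by rewrite -(can_eq (permK s)) => /unlift_some[] ? ? ->.
have inj_s' : injective s'.
  by move=> k1 k2 /(congr1 (lift (s ord0))); rewrite !s'K => /perm_inj/lift_inj.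
exists (perm inj_s'); apply/permP => k.
case: (unliftP ord0 k) => [k'|] ->; first by rewrite lift_perm_lift permE s'K.
by rewrite lift_perm_id.
Qed.

Lemma odd_perm_inversions {d} (s : 'S_d) : odd (perm_inversions s) = odd_perm s.
Proof.
elim: d s => [|d IHd] s.
  have -> : s = 1%g by apply/permP => -[].
  by rewrite odd_perm1 /perm_inversions big_ord0.
have [s' ->] := perm_lift_ord0 s.
by rewrite perm_inversions_lift oddD IHd odd_lift_perm.
Qed.

Section SetSeq.
Context {n : nat}.
Implicit Types K : {set 'I_n}.

Lemma sorted_setseq K : sorted ltn (setseq K).
Proof.
rewrite /setseq.
have -> : enum K = [seq x <- enum 'I_n | x \in K] by rewrite [in RHS]enumT /enum_mem.
rewrite sorted_map; apply: sorted_filter; first exact: ltn_trans.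
by rewrite -sorted_map val_enum_ord iota_ltn_sorted.
Qed.

Lemma size_setseq K : size (setseq K) = #|K|.
Proof. by rewrite size_map cardE. Qed.

Lemma uniq_setseq K : uniq (setseq K).
Proof. exact: (sorted_uniq ltn_trans ltnn (sorted_setseq K)). Qed.

Lemma mem_setseq K (v : 'I_n) : (val v \in setseq K) = (v \in K).
Proof. by rewrite /setseq (mem_map val_inj) mem_enum. Qed.

Lemma ltn_nth_setseq K i j : (i < #|K|)%N -> (j < #|K|)%N ->
  (nth 0%N (setseq K) i < nth 0%N (setseq K) j)%N = (i < j)%N.
Proof.
rewrite -!size_setseq => ltiK ltjK.
have mono := sorted_ltn_nth ltn_trans 0%N (sorted_setseq K).
case: (ltngtP i j) => [ltij|ltji|->]; [exact: mono | | exact: ltnn].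
by apply/negbTE; rewrite -leqNgt ltnW ?mono.
Qed.

Lemma inversions_setseq K : inversions (setseq K) = 0%N.
Proof.
rewrite /inversions big1 // => i _; rewrite big1 // => j _.
by rewrite ltn_nth_setseq -?size_setseq //; case: (ltngtP i j).
Qed.

End SetSeq.

Definition ffun_vals {n d} (x : {ffun 'I_d -> 'I_n}) : seq nat := map val (codom x).

Lemma size_ffun_vals {n d} (x : {ffun 'I_d -> 'I_n}) : size (ffun_vals x) = d.
Proof. by rewrite size_map size_codom card_ord. Qed.

Lemma nth_ffun_vals {n d} (x : {ffun 'I_d -> 'I_n}) (k : 'I_d) :
  nth 0%N (ffun_vals x) k = val (x k).
Proof.
by rewrite (nth_map (x k)) ?size_codom ?card_ord // codomE (nth_map k) ?size_enum_ord ?nth_ord_enum.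
Qed.

Section EnumPerm.
Context {n d : nat} {K : {set 'I_n}} (cardK : #|K| = d).

Let setseqK : d.-tuple nat := Tuple (introT eqP (etrans (size_setseq K) cardK)).

Definition enum_perm (s : 'S_d) : {ffun 'I_d -> 'I_n} :=
  [ffun k => enum_val (cast_ord (esym cardK) (s k))].

Lemma val_enum_perm s k : val (enum_perm s k) = nth 0%N (setseq K) (s k).
Proof.
rewrite ffunE /setseq.
rewrite (nth_map (enum_val (cast_ord (esym cardK) (s k)))).
  by congr val; apply: enum_val_nth.
by move: cardK; rewrite cardE => ->.
Qed.

Lemma enum_perm_inj : injective enum_perm.
Proof.
move=> s1 s2 /ffunP eq12; apply/permP => k.
by have := eq12 k; rewrite !ffunE => /enum_val_inj/cast_ord_inj.
Qed.

Lemma ffun_vals_enum_perm s : ffun_vals (enum_perm s) = [tuple tnth setseqK (s i) | i < d].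
Proof.
rewrite /ffun_vals codomE -map_comp.
by apply: eq_map => k; rewrite /= val_enum_perm (tnth_nth 0%N).
Qed.

Lemma perm_eq_ffun_vals x : perm_eq (setseq K) (ffun_vals x) -> exists s, x = enum_perm s.
Proof.
rewrite perm_sym => /(@tuple_permP _ _ _ setseqK) [s eq_x]; exists s.
apply/ffunP => k; apply: val_inj.
by rewrite val_enum_perm -nth_ffun_vals eq_x nth_mktuple (tnth_nth 0%N).
Qed.

Lemma fco_enum_perm s : fco K (ffun_vals (enum_perm s)) = (-1) ^+ odd_perm s.
Proof.
rewrite /fco.
have -> : perm_eq (setseq K) (ffun_vals (enum_perm s)).
  by rewrite perm_sym; apply/(@tuple_permP _ _ _ setseqK); exists s; rewrite ffun_vals_enum_perm.
have -> : inversions (ffun_vals (enum_perm s)) = perm_inversions s.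
  rewrite /inversions size_ffun_vals; apply: eq_bigr => i _; apply: eq_bigr => j _.
  by rewrite !nth_ffun_vals !val_enum_perm ltn_nth_setseq ?cardK.
by rewrite -signr_odd odd_perm_inversions.
Qed.

Lemma sum_enum_perm {V : pzRingType} (W : {ffun 'I_d -> 'I_n} -> V) :
  \sum_(s : 'S_d) (-1) ^+ odd_perm s * W (enum_perm s) =
  \sum_x (fco K (ffun_vals x))%:~R * W x.
Proof.
rewrite [RHS](bigID (mem (enum_perm @: [set: 'S_d]))) /=.
rewrite [X in _ + X]big1 ?addr0 => [|x]; last first.
  case: (eqVneq (fco K (ffun_vals x)) 0) => [-> _|]; first by rewrite mul0r.
  rewrite /fco; case: ifP => [/perm_eq_ffun_vals [s ->]|]; last by rewrite eqxx.
  by rewrite imset_f ?in_setT.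
rewrite big_imset /=; last by move=> ? ? _ _; apply: enum_perm_inj.
by apply: eq_big => [s|s _]; rewrite ?in_setT ?fco_enum_perm ?intr_sign.
Qed.

End EnumPerm.

Definition cross (u v : seq nat) : nat := \sum_(x <- u) \sum_(y <- v) (y < x)%N.

Lemma perm_cross {u v u' v'} : perm_eq u u' -> perm_eq v v' -> cross u v = cross u' v'.
Proof.
move=> eq_u eq_v; rewrite /cross (perm_big _ eq_u); apply: eq_bigr => x _.
exact: perm_big.
Qed.

Lemma sum_seq_ord (u : seq nat) (F : nat -> nat) :
  (\sum_(x <- u) F x = \sum_(i < size u) F (nth 0%N u i))%N.
Proof. by rewrite (big_nth 0%N) big_mkord. Qed.

Lemma inversions_cat u v :
  inversions (u ++ v) = (inversions u + inversions v + cross u v)%N.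
Proof.
rewrite /inversions /cross size_cat big_split_ord /= sum_seq_ord.
under eq_bigr => i _ do rewrite big_split_ord /=.
under [X in (_ + X)%N]eq_bigr => i _ do rewrite big_split_ord /=.
rewrite big_split /= [X in (_ + X)%N]big_split /=.
rewrite [X in (_ + (X + _))%N]big1 ?add0n => [|i _]; last first.
  by rewrite big1 // => j _; rewrite ltnNge (leq_trans (ltnW (ltn_ord j)) (leq_addr _ _)).
rewrite -!addnA; congr addn.
  by apply: eq_bigr => i _; apply: eq_bigr => j _; rewrite /= !nth_cat !ltn_ord.
rewrite addnC; congr addn.
  apply: eq_bigr => i _; apply: eq_bigr => j _.
  by rewrite /= !nth_cat ltn_add2l !ltnNge !leq_addr /= !addKn.
apply: eq_bigr => i _; rewrite sum_seq_ord; apply: eq_bigr => j _.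
rewrite /= !nth_cat ltn_ord (leq_trans (ltn_ord i) (leq_addr _ _)) /=.
have -> : (size u + j < size u)%N = false by rewrite ltnNge leq_addr.
by rewrite addKn.
Qed.

Section FcoCat.
Context {n : nat}.
Implicit Types (K : {set 'I_n}) (u v : seq 'I_n).

Lemma fco_eq0 K {w : seq nat} : ~~ uniq w -> fco K w = 0.
Proof.
apply: contraNeq; rewrite /fco; case: ifP => [eqKw _|_]; last by rewrite eqxx.
by rewrite -(perm_uniq eqKw) uniq_setseq.
Qed.

Lemma fco_neq0_set I0 u : fco I0 (map val u) != 0 -> I0 = [set x in u].
Proof.
rewrite /fco; case: ifP => [eqIu _|_]; last by rewrite eqxx.
by apply/setP => x; rewrite inE -mem_setseq (perm_mem eqIu) (mem_map val_inj).
Qed.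

Lemma perm_setseq_set {u} : uniq u -> perm_eq (setseq [set x in u]) (map val u).
Proof.
move=> uniq_u; apply: uniq_perm; rewrite ?uniq_setseq ?(map_inj_uniq val_inj) // => y.
apply/idP/idP => [/mapP [x] | /mapP [x x_u ->]]; last by rewrite mem_setseq inE.
by rewrite mem_enum inE => x_u ->; apply: map_f.
Qed.

Lemma fco_cat K {a p : nat} {u v} : size u = a -> size v = p ->
  fco K (map val u ++ map val v) =
  \sum_(I0 : {set 'I_n} | #|I0| == a) \sum_(L0 : {set 'I_n} | #|L0| == p)
     fco K (setseq I0 ++ setseq L0) * fco I0 (map val u) * fco L0 (map val v).
Proof.
move=> size_u size_v; set U := [set x in u]; set V := [set x in v].
rewrite (sum_only1 _ _ U) => [|I0 neqU]; last first.
  apply: big1 => L0 _; have [->|/fco_neq0_set eqU] := eqVneq (fco I0 (map val u)) 0.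
    by rewrite mulr0 mul0r.
  by rewrite eqU eqxx in neqU.
rewrite (sum_only1 _ _ V) => [|L0 neqV]; last first.
  have [->|/fco_neq0_set eqV] := eqVneq (fco L0 (map val v)) 0; first by rewrite mulr0.
  by rewrite eqV eqxx in neqV.
have [uniq_u|not_uniq_u] := boolP (uniq u); last first.
  have not_uniq : ~~ uniq (map val u) by rewrite (map_inj_uniq val_inj).
  rewrite (fco_eq0 _ not_uniq) mulr0 mul0r !if_same; apply: fco_eq0.
  by apply: contra not_uniq; rewrite cat_uniq => /andP [].
have [uniq_v|not_uniq_v] := boolP (uniq v); last first.
  have not_uniq : ~~ uniq (map val v) by rewrite (map_inj_uniq val_inj).
  rewrite (fco_eq0 _ not_uniq) mulr0 !if_same; apply: fco_eq0.
  by apply: contra not_uniq; rewrite cat_uniq => /and3P [].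
have eqU := perm_setseq_set uniq_u; have eqV := perm_setseq_set uniq_v.
rewrite -(size_map val) -(perm_size eqU) size_setseq in size_u.
rewrite -(size_map val) -(perm_size eqV) size_setseq in size_v.
rewrite size_u size_v !eqxx /fco eqU eqV (permPr (perm_cat eqU eqV)).
case: ifP => _; last by rewrite !mul0r.
rewrite inversions_cat inversions_cat !inversions_setseq (perm_cross eqU eqV) !exprD.
by rewrite !expr0 !mul1r mulrC mulrA.
Qed.

Lemma fco_card K w : fco K w != 0 -> #|K| = size w.
Proof.
by rewrite /fco; case: ifP => [/perm_size <- _|_]; rewrite ?size_setseq ?eqxx.
Qed.

End FcoCat.

(** * Laplace expansion of Yangian minors *)

Section FfunCat.
Context {T : finType} {a p : nat}.
Implicit Types (y : {ffun 'I_a -> T}) (z : {ffun 'I_p -> T}).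

Definition ffun_cat y z : {ffun 'I_(a + p) -> T} :=
  [ffun k => match split k with inl i => y i | inr j => z j end].

Lemma ffun_cat_lshift y z i : ffun_cat y z (lshift p i) = y i.
Proof. by rewrite ffunE (unsplitK (inl _ i)). Qed.

Lemma ffun_cat_rshift y z j : ffun_cat y z (rshift a j) = z j.
Proof. by rewrite ffunE (unsplitK (inr _ j)). Qed.

Lemma sum_ffun_cat (V : nmodType) (F : {ffun 'I_(a + p) -> T} -> V) :
  \sum_x F x = \sum_y \sum_z F (ffun_cat y z).
Proof.
rewrite pair_big /=.
pose unsplit_ffun (x : {ffun 'I_(a + p) -> T}) :=
  ([ffun i => x (lshift p i)], [ffun j => x (rshift a j)]).
have cat_bij : bijective (fun yz : {ffun 'I_a -> T} * {ffun 'I_p -> T} => ffun_cat yz.1 yz.2).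
  exists unsplit_ffun => [[y z]|x].
    by congr pair; apply/ffunP => i; rewrite ffunE ?ffun_cat_lshift ?ffun_cat_rshift.
  apply/ffunP => k; rewrite /= ffunE.
  by rewrite -{2}(splitK k); case: (split k) => i; rewrite /= ffunE.
by rewrite (reindex _ (onW_bij _ cat_bij)).
Qed.

End FfunCat.

Lemma ffun_vals_cat n a p (y : {ffun 'I_a -> 'I_n}) (z : {ffun 'I_p -> 'I_n}) :
  ffun_vals (ffun_cat y z) = ffun_vals y ++ ffun_vals z.
Proof.
apply: (@eq_from_nth _ 0%N); first by rewrite size_cat !size_ffun_vals.
move=> i; rewrite size_ffun_vals => lti.
rewrite (nth_ffun_vals _ (Ordinal lti)) nth_cat size_ffun_vals.
case: (splitP (Ordinal lti)) => [i' /= eq_i|j' /= eq_i].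
  have -> : Ordinal lti = lshift p i' by apply: val_inj.
  by rewrite ffun_cat_lshift eq_i nth_ffun_vals.
have -> : Ordinal lti = rshift a j' by apply: val_inj.
by rewrite ffun_cat_rshift eq_i addKn nth_ffun_vals.
Qed.

Section Laplace.
Context {R : nzRingType} (t : nat -> nat -> nat -> R).

Definition diag_prod {d} (w c : 'I_d -> nat) : nat -> R :=
  \big[@mulser R/oneser R]_(k < d) shift (- (k : nat)%:Z) (fun r => tco t r (w k) (c k)).

Lemma eq_diag_prod d (w w' c c' : 'I_d -> nat) :
  w =1 w' -> c =1 c' -> diag_prod w c = diag_prod w' c'.
Proof. by move=> eq_w eq_c; apply: eq_bigr => k _; rewrite eq_w eq_c. Qed.

Lemma diag_prod_cat a p (w c : 'I_(a + p) -> nat) :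
  diag_prod w c = mulser (diag_prod (w \o lshift p) (c \o lshift p))
                         (shift (- a%:Z) (diag_prod (w \o @rshift a p) (c \o @rshift a p))).
Proof.
rewrite /diag_prod big_split_ord /= shift_bigmulser; congr mulser.
by apply: eq_bigr => k _; rewrite shift_shift /= PoszD opprD addrC.
Qed.

(* Weighting all row assignments by [fco K], instead of summing over
   permutations, lets the two column blocks choose their rows independently. *)
Lemma minor_ffun_sum {n} {K : {set 'I_n}} {J : seq nat} : #|K| = size J ->
  minor t (setseq K) J = fun m =>
    \sum_(x : {ffun 'I_(size J) -> 'I_n})
      (fco K (ffun_vals x))%:~R * diag_prod (fun k => val (x k)) (fun k => nth 0%N J k) m.
Proof.
move=> cardK; apply: functional_extensionality => m; rewrite /minor.
rewrite -(sum_enum_perm cardK (fun x => diag_prod (fun k => val (x k)) (fun k => nth 0%N J k) m)).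
apply: eq_bigr => s _; congr (_ * _ m).
by apply: eq_diag_prod => k //; rewrite val_enum_perm.
Qed.

Lemma minor_cat_ffun_sum {n} {K : {set 'I_n}} {J1 J2 : seq nat} m :
    #|K| = (size J1 + size J2)%N ->
  minor t (setseq K) (J1 ++ J2) m =
  \sum_(x : {ffun 'I_(size J1 + size J2) -> 'I_n})
    (fco K (ffun_vals x))%:~R * diag_prod (fun k => val (x k)) (fun k => nth 0%N (J1 ++ J2) k) m.
Proof. by rewrite -size_cat => cardK; rewrite (minor_ffun_sum cardK) /= size_cat. Qed.

Lemma minor_cat {n} {K : {set 'I_n}} {J1 J2 : seq nat} m :
    #|K| = (size J1 + size J2)%N ->
  minor t (setseq K) (J1 ++ J2) m =
  \sum_(I0 : {set 'I_n} | #|I0| == size J1) \sum_(L0 : {set 'I_n} | #|L0| == size J2)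
     (fco K (setseq I0 ++ setseq L0))%:~R *
     mulser (minor t (setseq I0) J1) (shift (- (size J1)%:Z) (minor t (setseq L0) J2)) m.
Proof.
move=> cardK; rewrite minor_cat_ffun_sum // sum_ffun_cat.
pose D1 (y : {ffun 'I_(size J1) -> 'I_n}) :=
  diag_prod (fun k => val (y k)) (fun k => nth 0%N J1 k).
pose D2 (z : {ffun 'I_(size J2) -> 'I_n}) :=
  diag_prod (fun k => val (z k)) (fun k => nth 0%N J2 k).
have diag_prod_ffun_cat y z :
    diag_prod (fun k => val (ffun_cat y z k)) (fun k => nth 0%N (J1 ++ J2) k) =
    mulser (D1 y) (shift (- (size J1)%:Z) (D2 z)).
  rewrite diag_prod_cat; congr mulser; last congr shift.
    by apply: eq_diag_prod => k /=; rewrite ?ffun_cat_lshift // nth_cat ltn_ord.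
  apply: eq_diag_prod => k /=; rewrite ?ffun_cat_rshift // nth_cat.
  by rewrite ltnNge leq_addr addKn.
have size_codom_ord d (x : {ffun 'I_d -> 'I_n}) : size (codom x) = d.
  by rewrite size_codom card_ord.
transitivity (\sum_y \sum_z \sum_(I0 : {set 'I_n} | #|I0| == size J1)
    \sum_(L0 : {set 'I_n} | #|L0| == size J2) (fco K (setseq I0 ++ setseq L0))%:~R *
    ((fco I0 (ffun_vals y) * fco L0 (ffun_vals z))%:~R *
     mulser (D1 y) (shift (- (size J1)%:Z) (D2 z)) m)).
  apply: eq_bigr => y _; apply: eq_bigr => z _.
  rewrite diag_prod_ffun_cat ffun_vals_cat.
  rewrite (fco_cat K (size_codom_ord _ y) (size_codom_ord _ z)) rmorph_sum mulr_suml.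
  apply: eq_bigr => I0 _; rewrite rmorph_sum mulr_suml; apply: eq_bigr => L0 _.
  by rewrite !rmorphM !mulrA.
under eq_bigr => y _ do rewrite exchange_big.
rewrite exchange_big; apply: eq_bigr => I0 /eqP cardI0.
under eq_bigr => y _ do rewrite exchange_big.
rewrite exchange_big; apply: eq_bigr => L0 /eqP cardL0.
rewrite (minor_ffun_sum cardI0) (minor_ffun_sum cardL0) shift_lincomb mulser_lincomb.
by rewrite mulr_sumr; apply: eq_bigr => y _; rewrite mulr_sumr.
Qed.

End Laplace.

(** * The comodule maps *)

Section Comodule.
Context {R : nzRingType} (t : nat -> nat -> nat -> R) {n : nat}.
Implicit Types (K I L : {set 'I_n}).

Lemma rhoCE k J r K s :
  rhoC k t J r K s = if #|K| == k then mulser (monoser s) (minor t (setseq K) J) r else 0.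
Proof. by rewrite /rhoC mulser_monol; case: (#|K| == k). Qed.

Lemma rho_hE k a J m K s :
  rho_h k t a J m K s =
  if #|K| == k then shift a (mulser (monoser s) (minor t (setseq K) J)) m else 0.
Proof.
rewrite /rho_h; case: ifP => cardK; last by apply: big1 => r _; rewrite rhoCE cardK mulr0.
by apply: eq_bigr => r _; rewrite rhoCE cardK mulrzl -mulrzr.
Qed.

Lemma rho_gE k1 k2 a I L m K1 s1 K2 s2 :
  rho_g k1 k2 t a I L m K1 s1 K2 s2 =
  if (#|K1| == k1) && (#|K2| == k2) then
    mulser (shift a (mulser (monoser s1) (minor t (setseq K1) (setseq I))))
           (mulser (monoser s2) (minor t (setseq K2) (setseq L))) m
  else 0.
Proof.
rewrite /rho_g /rhoCC; case: ifP => [/andP [/eqP cardK1 /eqP cardK2]|cardK]; last first.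
  apply: big1 => s _; apply: big1 => r _; rewrite !rhoCE.
  by case/nandP: (negbT cardK) => /negbTE -> /=; rewrite ?mul0r ?mulr0.
rewrite mulser_rev; apply: eq_bigr => s _; rewrite /shift mulr_suml.
by apply: eq_bigr => r _; rewrite !rhoCE cardK1 cardK2 !eqxx mulrA mulrzl -mulrzr.
Qed.

Lemma sum_gE k1 k2 a N (c : {set 'I_n} -> {set 'I_n} -> nat -> R) K1 s1 K2 s2 :
  sum_g k1 k2 a N c K1 s1 K2 s2 =
  if (#|K1| == k1) && (#|K2| == k2) then
    \sum_(m < N) (if (s1 + s2 <= m)%N then csh a s1 (m - s2 - s1) else 0)%:~R * c K1 K2 m
  else 0.
Proof.
rewrite /sum_g (sum_only1 _ _ K1) => [|I0 neqI0]; last first.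
  by apply: big1 => L0 _; apply: big1 => m _; rewrite /gco eq_sym (negbTE neqI0) mul0r.
case: ifP => //= _; rewrite (sum_only1 _ _ K2) => [|L0 neqL0]; last first.
  by apply: big1 => m _; rewrite /gco eqxx eq_sym (negbTE neqL0) mul0r.
by case: ifP => // _; apply: eq_bigr => m _; rewrite /gco !eqxx.
Qed.

Lemma sum_h_sum_g k1 k2 a N (c : {set 'I_n} -> {set 'I_n} -> nat -> R) K s :
  sum_h k1 k2 a N c K s =
  \sum_(I0 : {set 'I_n} | #|I0| == k1) \sum_(L0 : {set 'I_n} | #|L0| == k2)
     (fco K (setseq I0 ++ setseq L0))%:~R * sum_g k1 k2 a N c I0 s L0 0.
Proof.
apply: eq_bigr => I0 cardI0; apply: eq_bigr => L0 cardL0.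
rewrite sum_gE cardI0 cardL0 mulr_sumr; apply: eq_bigr => m _.
rewrite /hco addn0 subn0 mulrA -intrM mulrC.
by case: ifP => _; rewrite ?mulr0 ?mul0r // mulrC.
Qed.

Lemma rho_g_sum_g k1 k2 a I L m K1 s1 K2 s2 :
  rho_g k1 k2 t a I L m K1 s1 K2 s2 =
  sum_g k1 k2 a m.+1 (fun I0 L0 j => mulser (shift a (minor t (setseq I0) (setseq I)))
                                            (minor t (setseq L0) (setseq L)) (m - j))
        K1 s1 K2 s2.
Proof.
rewrite rho_gE sum_gE; case: ifP => // _.
set P := minor t _ (setseq I); set Q := minor t _ (setseq L).
transitivity (mulser (mulser (shift a (monoser s1)) (monoser s2)) (mulser (shift a P) Q) m).
  rewrite shift_mulser -!mulserA; congr (mulser _ _ m).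
  by rewrite !mulserA mulser_monoC.
by rewrite {1}/mulser; apply: eq_bigr => j _; rewrite mulser_shift_monoser.
Qed.

Lemma rho_h_cat {k1 k2 I L} m K s : #|I| = k1 -> #|L| = k2 ->
  rho_h (k1 + k2) t k1%:Z (setseq I ++ setseq L) m K s =
  \sum_(I0 : {set 'I_n} | #|I0| == k1) \sum_(L0 : {set 'I_n} | #|L0| == k2)
     (fco K (setseq I0 ++ setseq L0))%:~R * rho_g k1 k2 t k1%:Z I L m I0 s L0 0.
Proof.
move=> cardI cardL; rewrite rho_hE; case: ifP => [/eqP cardK|cardK]; last first.
  symmetry; apply: big1 => I0 /eqP cardI0; apply: big1 => L0 /eqP cardL0.
  have [->|/fco_card] := eqVneq (fco K (setseq I0 ++ setseq L0)) 0; first by rewrite mul0r.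
  by rewrite size_cat !size_setseq cardI0 cardL0 => eqK; rewrite eqK eqxx in cardK.
have -> : minor t (setseq K) (setseq I ++ setseq L) = fun j =>
    \sum_(p : {set 'I_n} * {set 'I_n} | (#|p.1| == k1) && (#|p.2| == k2))
      (fco K (setseq p.1 ++ setseq p.2))%:~R *
      mulser (minor t (setseq p.1) (setseq I))
             (shift (- k1%:Z) (minor t (setseq p.2) (setseq L))) j.
  apply: functional_extensionality => j.
  by rewrite minor_cat !size_setseq ?cardI ?cardL // pair_big.
rewrite shift_mulser_lincomb pair_big; apply: eq_bigr => [[I0 L0]] /= cardIL.
rewrite rho_gE cardIL monoser0 mul1ser mulserA shift_mulser.
by rewrite shift_shift addrN shift0.
Qed.

End Comodule.

Theorem mainTheorem7 (F : fieldType) (HF : [pchar F] =i pred0)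
  (A : algType F) (n d p : nat) (t : nat -> nat -> nat -> A) :
  (1 <= p)%N -> (p < d)%N -> (d <= n)%N ->
  yangian_rel n t ->
  forall (I L : {set 'I_n}), #|I| = (d - p)%N -> #|L| = p ->
  forall m : nat,
    (* rho(g_{I,L,m}) lies in C_n(d-p; d-p, p) (x) Y_n *)
    (exists (N : nat) (c : {set 'I_n} -> {set 'I_n} -> nat -> A),
       forall K1 s1 K2 s2,
         rho_g (d - p) p t (d - p)%:Z I L m K1 s1 K2 s2
         = sum_g (d - p) p (d - p)%:Z N c K1 s1 K2 s2) /\
    (* and (mu (x) id) rho = rho mu on the generator g_{I,L,m} *)
    (forall (N : nat) (c : {set 'I_n} -> {set 'I_n} -> nat -> A),
       (forall K1 s1 K2 s2,
         rho_g (d - p) p t (d - p)%:Z I L m K1 s1 K2 s2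
         = sum_g (d - p) p (d - p)%:Z N c K1 s1 K2 s2) ->
       forall K s,
         rho_h d t (d - p)%:Z (setseq I ++ setseq L) m K s
         = sum_h (d - p) p (d - p)%:Z N c K s).
Proof.
move=> _ lt_pd _ _ I L cardI cardL m; split.
  exists m.+1, (fun I0 L0 j => mulser (shift (d - p)%:Z (minor t (setseq I0) (setseq I)))
                                      (minor t (setseq L0) (setseq L)) (m - j)).
  by move=> K1 s1 K2 s2; apply: rho_g_sum_g.
move=> N c rho_g_eq K s.
rewrite -{1}(subnK (ltnW lt_pd)) (rho_h_cat t m K s cardI cardL) sum_h_sum_g.
by apply: eq_bigr => I0 _; apply: eq_bigr => L0 _; rewrite rho_g_eq.
Qed.
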